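(* Let $K$ be an algebraically closed field and $\Lambda=K\Gamma/I$ a finite-dimensional algebra ($\Gamma$ a finite quiver, $I$ admissible). Suppose that $U,U'$ are non-isomorphic uniserial finite-dimensional left $\Lambda$-modules with $\dim_KU=\dim_KU'$. Then $U$ does not degenerate to $U'$.
   Context: For $d=\dim_KU$, $\operatorname{Mod}^d_\Lambda$ denotes the affine variety of $\Lambda$-module structures on $K^d$, with the action of $\operatorname{GL}_d$ by conjugation whose orbits are the isomorphism classes. $U$ degenerates to $U'$ if a point of $\operatorname{Mod}^d_\Lambda$ corresponding to $U'$ lies in the Zariski closure of the $\operatorname{GL}_d$-orbit of points corresponding to $U$. *)

From HB Require Import structures.
From mathcomp Require Import all_boot all_algebra.
From mathcomp Require Import mpoly.

Set Implicit Arguments.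
Unset Strict Implicit.
Unset Printing Implicit Defensive.

Import GRing.Theory.
Local Open Scope ring_scope.

(* Quiver Gamma: vertices 'I_n, arrows 'I_m, source s, target t.       *)
(* A path is a pair (i, r) : starting vertex i, followed by the arrows *)
(* r = [:: a1; ...; ak] traversed in this order (a1 first).             *)
(* (i, [::]) is the trivial path e_i.                                  *)

Definition qpath (n m : nat) := ('I_n * seq 'I_m)%type.

Section Quiver.
Variables (n m : nat) (s t : 'I_m -> 'I_n).

Fixpoint valid_from (i : 'I_n) (r : seq 'I_m) : bool :=
  match r with
  | [::] => true
  | a :: r' => (s a == i) && valid_from (t a) r'
  end.

Definition validp (p : qpath n m) : bool := valid_from p.1 p.2.

Fixpoint pend (i : 'I_n) (r : seq 'I_m) : 'I_n :=
  match r with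
  | [::] => i
  | a :: r' => pend (t a) r'
  end.

(* Elements of the path algebra K Gamma are represented by their       *)
(* coefficient functions on paths (finitely supported, zero off the    *)
(* valid paths).                                                       *)
Variable K : fieldType.

Definition pa_elt (f : qpath n m -> K) : Prop :=
  (forall x, ~~ validp x -> f x = 0) /\
  (exists sp : seq (qpath n m), forall x, f x != 0 -> x \in sp).

(* left multiplication p * f by a path p = (j, q) : (i, r') |-> (i, r' ++ q)
   when r' ends at j (composition "first r', then q"). *)
Definition lmul (p : qpath n m) (f : qpath n m -> K) : qpath n m -> K :=
  fun x =>
    let k := (size x.2 - size p.2)%N in
    if [&& (size p.2 <= size x.2)%N, drop k x.2 == p.2 &
           pend x.1 (take k x.2) == p.1]
    then f (x.1, take k x.2) else 0.

(* right multiplication f * p by a path p = (j, q) : (pend j q, r') |-> (j, q ++ r'). *)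
Definition rmul (f : qpath n m -> K) (p : qpath n m) : qpath n m -> K :=
  fun x =>
    if [&& x.1 == p.1, (size p.2 <= size x.2)%N & take (size p.2) x.2 == p.2]
    then f (pend p.1 p.2, drop (size p.2) x.2) else 0.

Definition pa_ideal (I : (qpath n m -> K) -> Prop) : Prop :=
  [/\ forall f, I f -> pa_elt f,
      I (fun _ => 0),
      forall f g, I f -> I g -> I (fun x => f x + g x),
      forall c f, I f -> I (fun x => c * f x) &
      forall p f, validp p -> I f -> I (lmul p f) /\ I (rmul f p)].

Definition pind (p : qpath n m) : qpath n m -> K :=
  fun x => if x == p then 1 else 0.

(* I is admissible : R^L <= I <= R^2 for some L >= 2, R the arrow ideal
   (R^k is spanned by the paths of length >= k). *)
Definition admissible (I : (qpath n m -> K) -> Prop) : Prop :=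
  pa_ideal I /\
  exists L : nat, [/\ (2 <= L)%N,
    (forall p, validp p -> (L <= size p.2)%N -> I (pind p)) &
    (forall f x, I f -> (size x.2 < 2)%N -> f x = 0)].

(* Points of Mod^d_Lambda, Lambda = K Gamma / I: unital algebra maps   *)
(* K Gamma -> M_d(K) killing I, given by the images E i of the e_i and *)
(* A a of the arrows (K^d = column vectors, left action).              *)
Variable d : nat.

Fixpoint eval_from (A : 'I_m -> 'M[K]_d) (M : 'M[K]_d) (r : seq 'I_m) : 'M[K]_d :=
  match r with
  | [::] => M
  | a :: r' => eval_from A (A a *m M) r'
  end.

(* image of the path (i, [:: a1; ...; ak]) : A ak * ... * A a1 * E i *)
Definition evalp (E : 'I_n -> 'M[K]_d) (A : 'I_m -> 'M[K]_d) (p : qpath n m) :=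
  eval_from A (E p.1) p.2.

Definition kills (E : 'I_n -> 'M[K]_d) (A : 'I_m -> 'M[K]_d) (f : qpath n m -> K) :=
  forall sp : seq (qpath n m), uniq sp -> (forall x, f x != 0 -> x \in sp) ->
    \sum_(x <- sp) f x *: evalp E A x = 0.

Definition modpt (I : (qpath n m -> K) -> Prop)
    (E : 'I_n -> 'M[K]_d) (A : 'I_m -> 'M[K]_d) : Prop :=
  [/\ forall i j, E i *m E j = (if i == j then E i else 0),
      \sum_(i < n) E i = 1%:M,
      forall a, A a = E (t a) *m A a *m E (s a) &
      forall f, I f -> kills E A f].

Definition conj_pt (g : 'M[K]_d) (E : 'I_n -> 'M[K]_d) (A : 'I_m -> 'M[K]_d)
   (E' : 'I_n -> 'M[K]_d) (A' : 'I_m -> 'M[K]_d) : Prop :=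
  g \in unitmx /\
  (forall i, E' i = g *m E i *m invmx g) /\ (forall a, A' a = g *m A a *m invmx g).

Definition iso_pt E A E' A' : Prop := exists g, conj_pt g E A E' A'.

(* submodules of the module K^d given by (E, A): subspaces of column
   vectors stable under the action of every path (paths span Lambda). *)
Definition submodule (E : 'I_n -> 'M[K]_d) (A : 'I_m -> 'M[K]_d)
    (S : 'cV[K]_d -> Prop) : Prop :=
  [/\ S 0, forall v w, S v -> S w -> S (v + w),
      forall c v, S v -> S (c *: v) &
      forall p v, S v -> S (evalp E A p *m v)].

Definition uniserial E A : Prop :=
  forall S1 S2, submodule E A S1 -> submodule E A S2 ->
    (forall v, S1 v -> S2 v) \/ (forall v, S2 v -> S1 v).

(* Zariski topology on the ambient affine space of tuples (E, A),     *)
(* with coordinates the matrix entries.                                *)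
Definition coordT := (('I_n + 'I_m) * 'I_d * 'I_d)%type.

Definition coords (E : 'I_n -> 'M[K]_d) (A : 'I_m -> 'M[K]_d)
    : 'I_#|{: coordT}| -> K :=
  fun k => match enum_val k with
           | ((inl i, r), c) => E i r c
           | ((inr a, r), c) => A a r c
           end.

Definition in_zclosure (O : ('I_n -> 'M[K]_d) -> ('I_m -> 'M[K]_d) -> Prop)
    E' A' : Prop :=
  forall P : {mpoly K[#|{: coordT}|]},
    (forall E A, O E A -> P.@[coords E A] = 0) -> P.@[coords E' A'] = 0.

Definition orbit E A : ('I_n -> 'M[K]_d) -> ('I_m -> 'M[K]_d) -> Prop :=
  fun E' A' => iso_pt E A E' A'.

Definition degenerates E A E' A' : Prop :=
  exists E'' A'', iso_pt E' A' E'' A'' /\ in_zclosure (orbit E A) E'' A''.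

End Quiver.

From HB Require Import structures.
From mathcomp Require Import all_boot all_algebra.
From mathcomp Require Import mpoly.
From mathcomp Require Import perm.
From mathcomp Require Import zify.

(* Degenerating a module can only enlarge Hom spaces: for fixed V the space
   Hom(V, X) is the kernel of a matrix whose entries are polynomial in the
   point X, and [rank <= r] is a Zariski-closed condition, so
   dim Hom(V, U) <= dim Hom(V, U') whenever U degenerates to U'.
   Let 0 = V_0 < V_1 < ... < V_d = U be a composition series.  By induction
   V_j embeds into U' through some psi.  Homomorphisms V_(j+1) -> U' with
   image inside psi(V_j) correspond to homomorphisms V_(j+1) -> V_j, a proper
   subspace of Hom(V_(j+1), U) (it misses the inclusion).  Hence there is
   chi : V_(j+1) -> U' whose image is not inside psi(V_j); as U' is uniserial,
   that image strictly contains psi(V_j), so chi is injective.  For j = d we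
   get U ~ U'. *)

Set Implicit Arguments.
Unset Strict Implicit.
Unset Printing Implicit Defensive.

Import GRing.Theory.
Local Open Scope ring_scope.

Section PolynomialFunctions.
Variables (K : fieldType) (n m d : nat).

Local Notation point_fun T := (('I_n -> 'M[K]_d) -> ('I_m -> 'M[K]_d) -> T).

Definition polyfun (f : point_fun K) :=
  exists P : {mpoly K[#|{: coordT n m d}|]}, forall E A, P.@[coords E A] = f E A.

Lemma eq_polyfun f g : polyfun f -> (forall E A, f E A = g E A) -> polyfun g.
Proof. by move=> [P HP] fg; exists P => E A; rewrite HP fg. Qed.

Lemma polyfun_cst c : polyfun (fun _ _ => c).
Proof. by exists c%:MP => E A; rewrite mevalC. Qed.

Lemma polyfun_E i r c : polyfun (fun E A => E i r c).
Proof.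
exists 'X_(enum_rank ((inl i, r), c)) => E A.
by rewrite mevalXU /coords enum_rankK.
Qed.

Lemma polyfun_A a r c : polyfun (fun E A => A a r c).
Proof.
exists 'X_(enum_rank ((inr a, r), c)) => E A.
by rewrite mevalXU /coords enum_rankK.
Qed.

Lemma polyfun_add f g : polyfun f -> polyfun g -> polyfun (fun E A => f E A + g E A).
Proof. by move=> [P HP] [Q HQ]; exists (P + Q) => E A; rewrite mevalD HP HQ. Qed.

Lemma polyfun_mul f g : polyfun f -> polyfun g -> polyfun (fun E A => f E A * g E A).
Proof. by move=> [P HP] [Q HQ]; exists (P * Q) => E A; rewrite mevalM HP HQ. Qed.

Lemma polyfun_sum (T : Type) (r : seq T) (F : T -> point_fun K) :
  (forall i, polyfun (F i)) -> polyfun (fun E A => \sum_(i <- r) F i E A).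
Proof.
move=> HF; elim: r => [|x r IH].
  by apply: (eq_polyfun (polyfun_cst 0)) => E A; rewrite big_nil.
by apply: (eq_polyfun (polyfun_add (HF x) IH)) => E A; rewrite big_cons.
Qed.

Lemma polyfun_prod (T : Type) (r : seq T) (F : T -> point_fun K) :
  (forall i, polyfun (F i)) -> polyfun (fun E A => \prod_(i <- r) F i E A).
Proof.
move=> HF; elim: r => [|x r IH].
  by apply: (eq_polyfun (polyfun_cst 1)) => E A; rewrite big_nil.
by apply: (eq_polyfun (polyfun_mul (HF x) IH)) => E A; rewrite big_cons.
Qed.

Definition polyfun_mx p q (F : point_fun 'M[K]_(p, q)) :=
  forall i j, polyfun (fun E A => F E A i j).

Lemma polyfun_mxvec p q (F : point_fun 'M[K]_(p, q)) j :
  polyfun_mx F -> polyfun (fun E A => mxvec (F E A) 0 j).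
Proof.
move=> HF; case/mxvec_indexP: j => r c.
by apply: (eq_polyfun (HF r c)) => E A; rewrite mxvecE.
Qed.

Lemma polyfun_det p (F : point_fun 'M[K]_p) :
  polyfun_mx F -> polyfun (fun E A => \det (F E A)).
Proof.
move=> HF.
have Hterm (s : 'S_p) : polyfun (fun E A => (-1) ^+ s * \prod_i F E A i (s i)).
  by apply: polyfun_mul; [exact: polyfun_cst | apply: polyfun_prod => i; exact: HF].
exact: polyfun_sum.
Qed.

(* A nonzero maximal minor at the limit point is a polynomial that would have
   to vanish on O, hence at the limit point. *)
Lemma rank_le_zclosure p q (F : point_fun 'M[K]_(p, q)) O r E' A' :
  polyfun_mx F -> (forall E A, O E A -> (\rank (F E A) <= r)%N) ->
  in_zclosure O E' A' -> (\rank (F E' A') <= r)%N.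
Proof.
move=> HF HO Hcl; rewrite leqNgt; apply/negP => Hlt.
pose f := maxrankfun (F E' A').
have rfB : row_full (rowsub f (F E' A'))^T.
  by rewrite /row_full mxrank_tr; apply/eqP; apply/eqP; exact: maxrowsub_free.
pose g := fullrankfun rfB.
pose G E A := rowsub g (rowsub f (F E A))^T.
have [P HP] : polyfun (fun E A => \det (G E A)).
  by apply: polyfun_det => i j; apply: (eq_polyfun (HF (f j) (g i))) => E A; rewrite !mxE.
have Hz E A : O E A -> P.@[coords E A] = 0.
  move=> HOE; rewrite HP; apply/eqP; apply: contraTT Hlt => Hdet.
  rewrite -leqNgt; apply: leq_trans (HO E A HOE).
  have /mxrank_unit <- : G E A \in unitmx by rewrite unitmxE unitfE.
  apply: leq_trans (mxrankS (rowsub_sub _ _)) _; rewrite mxrank_tr.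
  exact: (mxrankS (rowsub_sub _ _)).
move: (Hcl P Hz); rewrite HP => /eqP; apply/negP.
by rewrite -unitfE -unitmxE; exact: fullrowsub_unit.
Qed.

End PolynomialFunctions.

Section PathEvaluation.
Variables (K : fieldType) (n m d : nat).

Definition gen_mx (E : 'I_n -> 'M[K]_d) (A : 'I_m -> 'M[K]_d) (g : 'I_n + 'I_m) :=
  match g with inl i => E i | inr a => A a end.

Lemma polyfun_gen_mx g r c : polyfun (fun E A => @gen_mx E A g r c).
Proof. by case: g => [i|a]; [exact: polyfun_E | exact: polyfun_A]. Qed.

Lemma eval_fromE (A : 'I_m -> 'M[K]_d) M r :
  eval_from A M r = eval_from A 1%:M r *m M.
Proof.
elim: r M => [|a r IH] M /=; first by rewrite mul1mx.
by rewrite IH (IH (A a *m 1%:M)) mulmx1 mulmxA.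
Qed.

Lemma eval_from_rcons (A : 'I_m -> 'M[K]_d) M r a :
  eval_from A M (rcons r a) = A a *m eval_from A M r.
Proof. by elim: r M => [|b r IH] M /=. Qed.

Lemma evalp_intertwine (E1 E2 : 'I_n -> 'M[K]_d) (A1 A2 : 'I_m -> 'M[K]_d) X :
  (forall g, gen_mx E1 A1 g *m X = X *m gen_mx E2 A2 g) ->
  forall p, evalp E1 A1 p *m X = X *m evalp E2 A2 p.
Proof.
move=> HX [i r]; rewrite /evalp /=.
have /= := HX (inl i); move: (E1 i) (E2 i) => M N.
elim: r M N => [|a r IH] M N //= HMN.
by apply: IH; rewrite -mulmxA HMN !mulmxA (HX (inr a)).
Qed.

End PathEvaluation.

Section PartialIdentity.
Context {K : fieldType} {d : nat}.

Local Notation pid := (@pid_mx K d d).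

Lemma row_pid_mul k (X : 'M[K]_d) (r : 'I_d) :
  row r (pid k *m X) = if (r < k)%N then row r X else 0.
Proof.
apply/rowP => c; rewrite !mxE (bigD1 r) //= big1 => [|l /negPf Hl].
  by rewrite !mxE eqxx /=; case: (r < k)%N; rewrite ?mul1r ?mul0r addr0 ?mxE.
by rewrite mxE (_ : (r == l :> nat) = false) ?mul0r // eq_sym; exact: Hl.
Qed.

Lemma pid_mul_eq k (X Y : 'M[K]_d) :
  (forall r : 'I_d, (r < k)%N -> row r X = row r Y) -> pid k *m X = pid k *m Y.
Proof.
by move=> H; apply/row_matrixP => r; rewrite !row_pid_mul; case: ifP => // /H.
Qed.

Lemma pid_mul_pid j k : (j <= k)%N -> pid j *m pid k = pid j.
Proof. by move=> Hjk; rewrite mul_pid_mx (minn_idPl Hjk) pid_mx_minv. Qed.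

End PartialIdentity.

(* Q j is an idempotent whose image is the term V_j of a composition series
   of the module K^d: the last clause says that this image is stable. *)
Definition submodule_flag (K : fieldType) n m d
    (E : 'I_n -> 'M[K]_d) (A : 'I_m -> 'M[K]_d) (Q : nat -> 'M[K]_d) :=
  [/\ Q 0%N = 0, Q d = 1%:M, forall j, Q j *m Q j = Q j,
      forall j, (j <= d)%N -> \rank (Q j) = j &
      forall j g, gen_mx E A g *m Q j = Q j *m gen_mx E A g *m Q j].

Section CompositionSeries.
Variables (K : fieldType) (n m : nat) (s t : 'I_m -> 'I_n).
Variables (I : (qpath n m -> K) -> Prop) (HI : admissible s t I) (d : nat).
Variables (E : 'I_n -> 'M[K]_d) (A : 'I_m -> 'M[K]_d) (HU : modpt s t I E A).

Lemma arrow_mul_idem a i : A a *m E i = if s a == i then A a else 0.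
Proof.
case: HU => HE _ HA _.
by rewrite (HA a) -!mulmxA HE; case: (s a == i); rewrite ?mulmx0.
Qed.

Lemma evalp_invalid i r : ~~ valid_from s t i r -> evalp E A (i, r) = 0.
Proof.
rewrite /evalp /=; elim: r i => [|a r IH] i //=.
rewrite eval_fromE arrow_mul_idem; case: (s a =P i) => [_|_] /= Hv; last by rewrite mulmx0.
case: HU => _ _ HA _.
by rewrite (HA a) !mulmxA -eval_fromE IH ?mul0mx.
Qed.

Lemma eval_from_nilpotent :
  exists L, forall r, (L <= size r)%N -> eval_from A 1%:M r = 0.
Proof.
case: HI => _ [L [_ HL _]]; exists L => r Hr.
case: HU => _ Hsum _ Hkill.
rewrite -[LHS]mulmx1 -[X in _ *m X]Hsum mulmx_sumr big1 // => i _.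
rewrite -eval_fromE -/(evalp E A (i, r)).
case Hv: (valid_from s t i r); last by rewrite evalp_invalid ?Hv.
have := Hkill _ (HL (i, r) Hv Hr) [:: (i, r)] erefl.
rewrite big_seq1 /pind eqxx scale1r; apply => x.
by rewrite inE; case: (x == (i, r)); rewrite ?eqxx.
Qed.

(* Row-vector form, acting through transposes: a proper subspace W of the
   row space can be enlarged by one vector v so that every generator maps v
   into W + v.  Take a longest path product with a row u outside W; then all
   arrows send u into W, and some idempotent E i does not. *)
Lemma extend_subspace_by_vector (W : 'M[K]_d) : (\rank W < d)%N ->
  exists v : 'rV[K]_d, ~~ (v <= W)%MS /\ forall g, (v *m (gen_mx E A g)^T <= W + v)%MS.
Proof.
move=> HW; have [L HL] := eval_from_nilpotent.
pose rprod (r : seq 'I_m) := (eval_from A 1%:M r)^T.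
pose good k := [exists r : k.-tuple 'I_m, ~~ (rprod r <= W)%MS].
have good0 : good 0%N.
  apply/existsP; exists [tuple]; rewrite /rprod /= trmx1.
  by apply: contraL HW => /mxrankS; rewrite mxrank1 -leqNgt.
have goodL k : good k -> (k <= L)%N.
  case/existsP => r; rewrite leqNgt; apply: contraNN => Hk.
  by rewrite /rprod HL ?trmx0 ?sub0mx // size_tuple ltnW.
case: (ex_maxnP (ex_intro _ 0%N good0) goodL) => k /existsP [r] /row_subPn [l Hl] Hmax.
set u := row l (rprod r) in Hl.
have Hua a : (u *m (A a)^T <= W)%MS.
  have /existsPn /(_ (rcons_tuple r a)) : ~~ good k.+1.
    by apply/negP => /Hmax; rewrite ltnn.
  rewrite negbK; apply: submx_trans.
  by rewrite /u -row_mul /rprod /= eval_from_rcons trmx_mul row_sub.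
have [i0 Hi0] : exists i0, ~~ (u *m (E i0)^T <= W)%MS.
  apply/existsP; apply: contraR Hl; rewrite negb_exists => /forallP Hall.
  case: HU => _ Hsum _ _.
  rewrite -[u]mulmx1 -trmx1 -Hsum raddf_sum mulmx_sumr summx_sub // => i _.
  by have := Hall i; rewrite negbK.
exists (u *m (E i0)^T); split => // -[j|a] /=; rewrite -mulmxA -trmx_mul.
  case: HU => HE _ _ _; rewrite HE.
  by case: (j =P i0) => [->|_]; rewrite ?addsmxSr // trmx0 mulmx0 sub0mx.
rewrite arrow_mul_idem; case: (s a == i0); last by rewrite trmx0 mulmx0 sub0mx.
exact: submx_trans (Hua a) (addsmxSl _ _).
Qed.

Local Notation pid := (@pid_mx K d d).

Lemma partial_flag_basis k : (k <= d)%N -> exists H : 'M[K]_d,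
  (forall (r : 'I_d) g, (r < k)%N -> (row r H *m (gen_mx E A g)^T <= pid r.+1 *m H)%MS)
  /\ \rank (pid k *m H) = k.
Proof.
elim: k => [|k IH] Hk; first by exists 0; rewrite pid_mx_0 mul0mx mxrank0.
have [H [HH Hr]] := IH (ltnW Hk).
have Hkd : (\rank (pid k *m H) < d)%N by rewrite Hr.
have [v [Hv Hvg]] := extend_subspace_by_vector Hkd.
pose H' := \matrix_(i, j) (if (i : nat) == k then v 0 j else H i j).
have rowH' (i : 'I_d) : row i H' = if (i : nat) == k then v else row i H.
  by apply/rowP => j; rewrite !mxE; case: eqP => // _; rewrite mxE.
have Hagree j : (j <= k)%N -> pid j *m H' = pid j *m H.
  move=> Hj; apply: pid_mul_eq => r Hrj; rewrite rowH'.
  by case: eqP => // Hrk; move: Hrj; rewrite Hrk ltnNge Hj.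
have HW : (pid k *m H <= pid k.+1 *m H')%MS.
  by rewrite -(Hagree k (leqnn k)) -(pid_mul_pid (leqnSn k)) -mulmxA submxMl.
have Hvs : (v <= pid k.+1 *m H')%MS.
  have := row_sub (Ordinal Hk) (pid k.+1 *m H').
  by rewrite row_pid_mul /= ltnSn rowH' /= eqxx.
exists H'; split.
  move=> r g; rewrite ltnS leq_eqVlt => /orP [/eqP Hrk|Hrk].
    rewrite rowH' Hrk eqxx; apply: submx_trans (Hvg g) _.
    by rewrite addsmx_sub HW Hvs.
  by rewrite rowH' (ltn_eqF Hrk) Hagree //; apply: HH.
apply/eqP; rewrite eqn_leq; apply/andP; split.
  by apply: leq_trans (mxrankM_maxl _ _) _; rewrite rank_pid_mx.
have Hlt : (\rank (pid k *m H) < \rank (pid k *m H + v)%MS)%N.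
  rewrite ltn_neqAle mxrankS ?addsmxSl // andbT.
  apply: contra Hv => /eqP Heq.
  have [_] := mxrank_leqif_sup (addsmxSl (pid k *m H) v).
  by rewrite Heq eqxx => /esym; rewrite addsmx_sub => /andP [].
rewrite -{1}Hr; apply: leq_trans Hlt (mxrankS _).
by rewrite addsmx_sub HW Hvs.
Qed.

Lemma exists_submodule_flag : exists Q, submodule_flag E A Q.
Proof.
have [H [HH Hr]] := partial_flag_basis (leqnn d).
rewrite pid_mx_1 mul1mx in Hr.
have Hu : H \in unitmx by rewrite -row_free_unit /row_free Hr.
have Hpp j : pid j *m pid j = pid j by rewrite pid_mul_pid.
have Hst j g : (pid j *m H *m (gen_mx E A g)^T <= pid j *m H)%MS.
  apply/row_subP => r; rewrite row_mul row_pid_mul.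
  case: ifP => Hrj; last by rewrite mul0mx sub0mx.
  apply: submx_trans (HH r g (ltn_ord r)) _.
  by rewrite -(pid_mul_pid Hrj) -mulmxA submxMl.
pose P j := invmx H *m pid j *m H.
exists (fun j => (P j)^T); split.
- by rewrite /P pid_mx_0 mulmx0 mul0mx trmx0.
- by rewrite /P pid_mx_1 mulmx1 mulVmx // trmx1.
- move=> j; rewrite -trmx_mul /P; congr (_^T).
  rewrite !mulmxA -[invmx H *m pid j *m H *m invmx H]mulmxA mulmxV // mulmx1.
  by rewrite -!mulmxA (mulmxA (pid j) (pid j)) Hpp.
- move=> j Hj; rewrite mxrank_tr /P mxrankMfree; last by rewrite row_free_unit.
  have Hf : row_full (invmx H) by rewrite row_full_unit unitmx_inv.
  by rewrite (eqmxMfull _ Hf) rank_pid_mx.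
- move=> j g; apply: trmx_inj; rewrite !trmx_mul !trmxK.
  have [C HC] := submxP (Hst j g).
  set X := pid j *m H; set N := (gen_mx E A g)^T.
  have HX : X *m (invmx H *m X) = X.
    by rewrite /X !mulmxA -(mulmxA (pid j) H (invmx H)) mulmxV // mulmx1 Hpp.
  have -> : invmx H *m pid j *m H = invmx H *m X by rewrite mulmxA.
  have HXN : invmx H *m X *m N = invmx H *m (C *m X) by rewrite -mulmxA HC.
  by rewrite [RHS]mulmxA HXN -[RHS]mulmxA -(mulmxA C X) HX.
Qed.

End CompositionSeries.



Section LinearMaps.
Variables (K : fieldType) (d : nat).

Lemma mul_vec_linear m1 n1 m2 n2 (f : 'M[K]_(m1, n1) -> 'M[K]_(m2, n2)) :
  linear f -> forall X, mxvec X *m lin_mx f = mxvec (f X).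
Proof.
move=> fL X.
exact: (mul_vec_lin (HB.pack f (GRing.isLinear.Build _ _ _ _ f fL))).
Qed.

Definition lmulmx (X : 'M[K]_d) := lin_mx (@mulmx K d d d X).

Lemma mxvec_lmulmx X psi : mxvec psi *m lmulmx X = mxvec (X *m psi).
Proof. exact: mul_vec_lin. Qed.

Lemma sub_ker_lmulmx X psi : (mxvec psi <= kermx (lmulmx X))%MS = (X *m psi == 0).
Proof. by rewrite sub_kermx mxvec_lmulmx mxvec_eq0. Qed.

Lemma row_free_lmulmx g : g \in unitmx -> row_free (lmulmx g).
Proof.
move=> Hg; have HTT : lmulmx g *m lmulmx (invmx g) = 1%:M.
  apply/row_matrixP => i; rewrite !rowE mulmx1 mulmxA -[delta_mx 0 i]vec_mxK.
  by rewrite !mxvec_lmulmx mulmxA mulVmx ?mul1mx.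
by rewrite row_free_unit; case: (mulmx1_unit HTT).
Qed.

Lemma mulmx_1B_eq0 (X Y : 'M[K]_d) : X *m (1%:M - Y) = 0 -> X *m Y = X.
Proof. by rewrite mulmxBr mulmx1 => /eqP; rewrite subr_eq0 => /eqP. Qed.

Lemma mul_1Bmx_eq0 (X Y : 'M[K]_d) : (1%:M - Y) *m X = 0 -> Y *m X = X.
Proof. by rewrite mulmxBl mul1mx => /eqP; rewrite subr_eq0 => /eqP. Qed.

End LinearMaps.

Section HomSpaces.
Variables (K : fieldType) (n m d : nat).
Variables (E : 'I_n -> 'M[K]_d) (A : 'I_m -> 'M[K]_d) (Q : 'M[K]_d).

(* With Q an idempotent whose image V is a submodule of (E, A), psi encodes
   the homomorphism V -> (E2, A2) it restricts to; it vanishes on ker Q. *)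
Definition hom_from (E2 : 'I_n -> 'M[K]_d) (A2 : 'I_m -> 'M[K]_d) (psi : 'M[K]_d) :=
  psi *m (1%:M - Q) = 0 /\
  forall g, gen_mx E2 A2 g *m psi = psi *m (gen_mx E A g *m Q).

Lemma hom_from_mulQ E2 A2 psi : hom_from E2 A2 psi -> psi *m Q = psi.
Proof. by case=> /mulmx_1B_eq0. Qed.

Lemma hom_from_inclusion :
  Q *m Q = Q -> (forall g, gen_mx E A g *m Q = Q *m gen_mx E A g *m Q) ->
  hom_from E A Q.
Proof.
move=> HQQ HQst; split; first by rewrite mulmxBr mulmx1 HQQ subrr.
by move=> g; rewrite {1}HQst mulmxA.
Qed.

Lemma hom_image_submodule E2 A2 X :
  hom_from E2 A2 X -> submodule E2 A2 (fun v : 'cV[K]_d => (v^T <= X^T)%MS).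
Proof.
move=> [_ HX]; split.
- by rewrite trmx0 sub0mx.
- by move=> v w Hv Hw; rewrite linearD addmx_sub.
- by move=> c v Hv; rewrite linearZ scalemx_sub.
- move=> p v Hv; rewrite trmx_mul; apply: submx_trans (submxMr _ Hv) _.
  have HXint g : gen_mx E2 A2 g *m X =
      X *m gen_mx (fun i => E i *m Q) (fun a => A a *m Q) g by case: g.
  by rewrite -trmx_mul (evalp_intertwine HXint) trmx_mul submxMl.
Qed.

(* One block row per generator, plus one for the condition psi (1 - Q) = 0. *)
Definition hom_fun (E2 : 'I_n -> 'M[K]_d) (A2 : 'I_m -> 'M[K]_d) (psi : 'M[K]_d)
   : 'M[K]_(#|{: option ('I_n + 'I_m)}|, d * d) :=
  \matrix_(k, l) mxvec (match enum_val k with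
                        | None => psi *m (1%:M - Q)
                        | Some g => gen_mx E2 A2 g *m psi - psi *m (gen_mx E A g *m Q)
                        end) 0 l.

Lemma hom_fun_linear E2 A2 : linear (hom_fun E2 A2).
Proof.
move=> c x y; apply/matrixP => k l; rewrite !mxE.
case: (enum_val k) => [g|]; rewrite ?linearP ?mxE //.
  by rewrite mulmxDl -scalemxAl opprD addrACA -scalerBr linearP !mxE.
by rewrite mulmxDl -scalemxAl linearP !mxE.
Qed.

Definition hom_mx E2 A2 := lin_mx (hom_fun E2 A2).

Lemma hom_fun_eq0 E2 A2 psi : hom_fun E2 A2 psi = 0 <-> hom_from E2 A2 psi.
Proof.
split=> [H0|[H1 H2]].
  split=> [|g].
    apply/eqP; rewrite -mxvec_eq0; apply/eqP/rowP => l.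
    by move/matrixP: H0 => /(_ (enum_rank None) l); rewrite !mxE enum_rankK.
  apply/eqP; rewrite -subr_eq0 -mxvec_eq0; apply/eqP/rowP => l.
  by move/matrixP: H0 => /(_ (enum_rank (Some g)) l); rewrite !mxE enum_rankK.
apply/matrixP => k l; rewrite !mxE.
by case: (enum_val k) => [g|]; rewrite ?H2 ?subrr ?H1 linear0 mxE.
Qed.

Lemma sub_ker_hom_mx E2 A2 psi :
  (mxvec psi <= kermx (hom_mx E2 A2))%MS <-> hom_from E2 A2 psi.
Proof.
rewrite sub_kermx /hom_mx mul_vec_linear ?mxvec_eq0; last exact: hom_fun_linear.
by rewrite -hom_fun_eq0; split=> /eqP.
Qed.

Lemma polyfun_hom_mx : polyfun_mx (fun E2 A2 => hom_mx E2 A2).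
Proof.
move=> i j; set psi := vec_mx (delta_mx 0 i) : 'M[K]_d.
apply: (eq_polyfun (f := fun E2 A2 => mxvec (hom_fun E2 A2 psi) 0 j)); last first.
  by move=> E2 A2; rewrite /hom_mx /lin_mx /lin1_mx mxE.
apply: polyfun_mxvec => k l; rewrite /hom_fun.
apply: (eq_polyfun (f := fun E2 A2 => mxvec (match enum_val k with
           | None => psi *m (1%:M - Q)
           | Some g => gen_mx E2 A2 g *m psi - psi *m (gen_mx E A g *m Q)
           end) 0 l)); last by move=> E2 A2; rewrite mxE.
apply: polyfun_mxvec => r c.
case: (enum_val k) => [g|]; last exact: polyfun_cst.
apply: (eq_polyfun (f := fun E2 A2 => \sum_(l0 <- index_enum 'I_d) gen_mx E2 A2 g r l0 * psi l0 c
                                  + - (psi *m (gen_mx E A g *m Q)) r c)); last first.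
  by move=> E2 A2; rewrite !mxE.
apply: polyfun_add; last exact: polyfun_cst.
by apply: polyfun_sum => l0; apply: polyfun_mul; [exact: polyfun_gen_mx | exact: polyfun_cst].
Qed.

(* psi |-> g psi embeds Hom(V, (E1, A1)) into Hom(V, (E2, A2)). *)
Lemma rank_hom_mx_conj g E1 A1 E2 A2 : conj_pt g E1 A1 E2 A2 ->
  (\rank (hom_mx E2 A2) <= \rank (hom_mx E1 A1))%N.
Proof.
move=> Hc; have [Hg [HE HA]] := Hc.
have Hsub : (kermx (hom_mx E1 A1) *m lmulmx g <= kermx (hom_mx E2 A2))%MS.
  apply/row_subP => i; rewrite row_mul -[row i _]vec_mxK mxvec_lmulmx.
  have /sub_ker_hom_mx [H1 H2] : (mxvec (vec_mx (row i (kermx (hom_mx E1 A1))))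
      <= kermx (hom_mx E1 A1))%MS by rewrite vec_mxK row_sub.
  apply/sub_ker_hom_mx; split; first by rewrite -mulmxA H1 mulmx0.
  have Hgen h : gen_mx E2 A2 h = g *m gen_mx E1 A1 h *m invmx g by case: h.
  move=> h; rewrite Hgen -!mulmxA (mulmxA (invmx g)) mulVmx // mul1mx H2.
  by rewrite !mulmxA.
have := mxrankS Hsub; rewrite mxrankMfree ?row_free_lmulmx // !mxrank_ker.
have := rank_leq_row (hom_mx E1 A1); have := rank_leq_row (hom_mx E2 A2); lia.
Qed.

End HomSpaces.

Lemma trmx_sub_of_cols (K : fieldType) d (X Y : 'M[K]_d) :
  (forall v : 'cV[K]_d, (v^T <= X^T)%MS -> (v^T <= Y^T)%MS) -> (X^T <= Y^T)%MS.
Proof.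
by move=> H; apply/row_subP => i; rewrite -tr_col; apply: H; rewrite tr_col row_sub.
Qed.

Lemma conj_pt_inv (K : fieldType) n m d (g : 'M[K]_d) (E1 E2 : 'I_n -> 'M[K]_d)
    (A1 A2 : 'I_m -> 'M[K]_d) :
  conj_pt g E1 A1 E2 A2 -> conj_pt (invmx g) E2 A2 E1 A1.
Proof.
move=> [Hu [HE HA]]; split; first by rewrite unitmx_inv.
by split=> [i|a]; rewrite ?HE ?HA invmxK !mulmxA mulVmx // mul1mx -mulmxA mulVmx // mulmx1.
Qed.

Section Embedding.
Variables (K : fieldType) (n m d : nat).
Variables (E E' : 'I_n -> 'M[K]_d) (A A' : 'I_m -> 'M[K]_d) (Q : nat -> 'M[K]_d).
Hypothesis HQ : submodule_flag E A Q.
Hypothesis Huni' : uniserial E' A'.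
Hypothesis Hdeg : forall j,
  (\rank (hom_mx E A (Q j) E' A') <= \rank (hom_mx E A (Q j) E A))%N.

(* L is a left inverse of psi on V_j, so psi embeds V_j into (E', A'). *)
Definition embeds j := exists psi L, hom_from E A (Q j) E' A' psi /\ L *m psi = Q j.

Section Step.
Variables (j : nat) (psi L : 'M[K]_d).
Hypotheses (Hjd : (j < d)%N) (Hpsi : hom_from E A (Q j) E' A' psi) (HL : L *m psi = Q j).

Local Notation homU := (kermx (hom_mx E A (Q j.+1) E A)).
Local Notation homU_Vj := (homU :&: kermx (lmulmx (1%:M - Q j)))%MS.
Local Notation homU' := (kermx (hom_mx E A (Q j.+1) E' A')).
Local Notation homU'_psi := (homU' :&: kermx (lmulmx (1%:M - psi *m L)))%MS.

Lemma rank_hom_into_Vj_lt : (\rank homU_Vj < \rank homU)%N.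
Proof.
case: HQ => _ _ Qidem Qrank Qstab.
have Hincl : (mxvec (Q j.+1) <= homU)%MS.
  by apply/sub_ker_hom_mx; apply: hom_from_inclusion.
rewrite ltn_neqAle mxrankS ?capmxSl // andbT; apply/negP => /eqP Heq.
have [_] := mxrank_leqif_sup (capmxSl homU (kermx (lmulmx (1%:M - Q j)))).
rewrite Heq eqxx => /esym /(submx_trans Hincl).
rewrite sub_capmx sub_ker_lmulmx => /andP [_ /eqP /mul_1Bmx_eq0 HQQ].
have := mxrankM_maxl (Q j) (Q j.+1).
by rewrite HQQ !Qrank ?ltnn // ltnW.
Qed.

(* A homomorphism c : V_(j+1) -> U' with image in psi(V_j) is psi composed
   with the homomorphism Q_j L c : V_(j+1) -> V_j. *)
Lemma pullback_hom c :
  hom_from E A (Q j.+1) E' A' c -> (1%:M - psi *m L) *m c = 0 ->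
  [/\ hom_from E A (Q j.+1) E A (Q j *m L *m c),
      (1%:M - Q j) *m (Q j *m L *m c) = 0 & psi *m (Q j *m L *m c) = c].
Proof.
case: HQ => _ _ Qidem _ Qstab.
move=> [Hc1 Hc2] /mul_1Bmx_eq0 psiLc.
have psiQ := hom_from_mulQ Hpsi.
have Hback : psi *m (Q j *m L *m c) = c by rewrite !mulmxA psiQ.
split=> //; last by rewrite !mulmxA mulmxBl mul1mx Qidem subrr !mul0mx.
split=> [|g]; first by rewrite -!mulmxA Hc1 !mulmx0.
apply/eqP; rewrite -subr_eq0; apply/eqP; set X := _ - _.
have HpsiX : psi *m X = 0.
  have Hgen : psi *m (gen_mx E A g *m (Q j *m L *m c)) = gen_mx E' A' g *m c.
    rewrite !mulmxA -(mulmxA psi) -(proj2 Hpsi) -!mulmxA (mulmxA psi).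
    by rewrite psiLc.
  by rewrite /X mulmxBr Hgen (mulmxA psi (Q j *m L *m c)) Hback Hc2 subrr.
have HQX : Q j *m X = X by rewrite /X mulmxBr !mulmxA Qidem -Qstab.
by rewrite -HQX -HL -mulmxA HpsiX mulmx0.
Qed.

Lemma rank_hom_into_psi_le : (\rank homU'_psi <= \rank homU_Vj)%N.
Proof.
have Hmem u : (u <= homU'_psi)%MS ->
    hom_from E A (Q j.+1) E' A' (vec_mx u) /\ (1%:M - psi *m L) *m vec_mx u = 0.
  rewrite sub_capmx -{1 2}[u]vec_mxK sub_ker_lmulmx => /andP [Hu /eqP ->].
  by split=> //; apply/sub_ker_hom_mx.
have Hpull : (homU'_psi *m lmulmx (Q j *m L) <= homU_Vj)%MS.
  apply/row_subP => i; rewrite row_mul -[row i _]vec_mxK mxvec_lmulmx.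
  have [Hc HRc] := Hmem _ (row_sub i _).
  have [Hhom HVj _] := pullback_hom Hc HRc.
  by rewrite sub_capmx sub_ker_lmulmx HVj eqxx andbT; apply/sub_ker_hom_mx.
have Hpush : homU'_psi *m lmulmx (Q j *m L) *m lmulmx psi = homU'_psi.
  apply/row_matrixP => i; rewrite !row_mul -[row i homU'_psi]vec_mxK !mxvec_lmulmx.
  have [Hc HRc] := Hmem _ (row_sub i _).
  by have [_ _ ->] := pullback_hom Hc HRc.
by rewrite -{1}Hpush; apply: leq_trans (mxrankM_maxl _ _) (mxrankS Hpull).
Qed.

Lemma exists_hom_beyond_psi :
  exists chi, hom_from E A (Q j.+1) E' A' chi /\ ~~ (chi^T <= psi^T)%MS.
Proof.
have Hrank : (\rank homU'_psi < \rank homU')%N.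
  apply: leq_ltn_trans rank_hom_into_psi_le (leq_trans rank_hom_into_Vj_lt _).
  by rewrite !mxrank_ker; have := Hdeg j.+1; lia.
have : ~~ (homU' <= kermx (lmulmx (1%:M - psi *m L)))%MS.
  apply: contraL Hrank => Hsub; rewrite -leqNgt; apply: mxrankS.
  by rewrite sub_capmx submx_refl.
case/row_subPn => i; rewrite -[row i _]vec_mxK sub_ker_lmulmx => Hi.
exists (vec_mx (row i homU')); split.
  by apply/sub_ker_hom_mx; rewrite vec_mxK row_sub.
apply: contra Hi => /submxP [D HD].
rewrite -[vec_mx _]trmxK HD trmx_mul trmxK mulmxBl mul1mx !mulmxA.
by rewrite -(mulmxA psi L psi) HL (hom_from_mulQ Hpsi) subrr.
Qed.

Lemma embeds_succ : embeds j.+1.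
Proof.
case: HQ => _ _ _ Qrank _.
have [chi [Hchi Hnot]] := exists_hom_beyond_psi.
have Hpsi_chi : (psi^T <= chi^T)%MS.
  case: (Huni' (hom_image_submodule Hchi) (hom_image_submodule Hpsi)) => Hinc.
    by move: Hnot; rewrite trmx_sub_of_cols.
  exact: trmx_sub_of_cols.
have Hj : (j < \rank chi)%N.
  have [Hle Heq] := mxrank_leqif_sup Hpsi_chi; rewrite (negbTE Hnot) in Heq.
  have Hj : (j <= \rank psi)%N by rewrite -(Qrank j (ltnW Hjd)) -HL mxrankM_maxr.
  rewrite -mxrank_tr; apply: leq_ltn_trans Hj _.
  by rewrite -(mxrank_tr psi) ltn_neqAle Heq Hle.
have HchiQ : (chi <= Q j.+1)%MS by rewrite -(hom_from_mulQ Hchi) submxMl.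
have Hrk : \rank chi = \rank (Q j.+1).
  by apply/eqP; rewrite eqn_leq mxrankS //= Qrank.
have [_] := mxrank_leqif_sup HchiQ; rewrite Hrk eqxx => /esym /submxP [L' HL'].
by exists chi, L'; rewrite -HL'.
Qed.

End Step.

Lemma embeds_le j : (j <= d)%N -> embeds j.
Proof.
elim: j => [_|j IH Hjd].
  case: HQ => Q0 _ _ _ _; exists 0, 0; rewrite mulmx0 Q0.
  by split=> //; split=> [|g]; rewrite ?mul0mx ?mulmx0.
have [psi [L [Hpsi HL]]] := IH (ltnW Hjd).
exact: (embeds_succ Hjd Hpsi HL).
Qed.

Lemma iso_of_hom_rank_le : iso_pt E A E' A'.
Proof.
case: HQ => _ Qd _ _ _.
have [psi [L [[_ Hpsi] HL]]] := embeds_le (leqnn d).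
rewrite Qd in HL Hpsi.
have [_ Hu] := mulmx1_unit HL.
exists psi; split=> //; split=> [i|a].
  by have := Hpsi (inl i); rewrite /= mulmx1 => <-; rewrite -mulmxA mulmxV // mulmx1.
by have := Hpsi (inr a); rewrite /= mulmx1 => <-; rewrite -mulmxA mulmxV // mulmx1.
Qed.

End Embedding.

Theorem propositionE (K : closedFieldType) (n m : nat) (s t : 'I_m -> 'I_n)
    (I : (qpath n m -> K) -> Prop) (HI : admissible s t I) (d : nat)
    (E E' : 'I_n -> 'M[K]_d) (A A' : 'I_m -> 'M[K]_d)
    (HU : modpt s t I E A) (HU' : modpt s t I E' A')
    (Huni : uniserial E A) (Huni' : uniserial E' A')
    (Hniso : ~ iso_pt E A E' A') :
  ~ degenerates E A E' A'.
Proof.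
move=> [E'' [A'' [[g Hg] Hcl]]].
have [Q HQ] := exists_submodule_flag HI HU.
apply: Hniso; apply: (iso_of_hom_rank_le HQ Huni') => j.
apply: leq_trans (rank_hom_mx_conj E A (Q j) (conj_pt_inv Hg)) _.
apply: (rank_le_zclosure (polyfun_hom_mx E A (Q j)) _ Hcl) => E1 A1 [g1 Hg1].
exact: (rank_hom_mx_conj E A (Q j) Hg1).
Qed.
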